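(* Let $k\ge 2$ and $n$ be integers with $2k-1 \le n$. Then $$N(CM,k,n)\le\begin{cases} n-k+1 & \text{if } k \text{ is even},\\ (n-k+1)\cdot\bigl(1+\mathsf{d}(k-1,n)\bigr) & \text{if } k \text{ is odd.}\end{cases}$$
   Context: We are given $n$ balls, the set $[n]=\{1,\dots,n\}$, each colored with one of two colors by an unknown coloring. A ball $i$ is a majority ball if more than $n/2$ balls have the same color as $i$. A query is a subset $Q\subseteq[n]$ with $|Q|=k$. In the Counting Model (CM), the answer to a query $Q$ is the number $i\le k/2$ such that $Q$ contains exactly $i$ balls of one of the colors (and $k-i$ of the other); no indication of which color is given. A non-adaptive strategy is a family of queries $Q_1,\dots,Q_q$ fixed in advance. It succeeds if for every coloring, the answers determine the outcome: either every coloring consistent with the answers has no majority ball, or there is a ball that is a majority ball in every coloring consistent with the answers. $N(CM,k,n)$ is the minimum number of queries in a successful non-adaptive strategy. A 2-coloring of a $k$-element set is balanced if the sizes of the two color classes differ by at most one. A hypergraph has Property C if its vertices can be 2-colored so that every edge is balanced. For $k\ge 2$, $\mathsf{d}(k,n)$ denotes the minimum number of edges of a $k$-uniform hypergraph on $n$ vertices that does not have Property C. *)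

From mathcomp Require Import all_boot.
Set Implicit Arguments. Unset Strict Implicit. Unset Printing Implicit Defensive.

Definition coloring (n : nat) := {ffun 'I_n -> bool}.

Definition ncol n (c : coloring n) (b : bool) (Q : {set 'I_n}) : nat :=
  #|[set x in Q | c x == b]|.

(* Counting Model answer: the number i <= k/2 such that Q contains exactly
   i balls of one colour (and k-i of the other), i.e. the minority count. *)
Definition cm_answer n (c : coloring n) (Q : {set 'I_n}) : nat :=
  minn (ncol c true Q) (ncol c false Q).

Definition majority_ball n (c : coloring n) (i : 'I_n) : Prop :=
  n < 2 * #|[set j | c j == c i]|.

Definition consistent n (qs : seq {set 'I_n}) (c c' : coloring n) : Prop :=
  forall Q, Q \in qs -> cm_answer c' Q = cm_answer c Q.

Definition cm_successful n k (qs : seq {set 'I_n}) : Prop :=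
  (forall Q, Q \in qs -> #|Q| = k) /\
  forall c : coloring n,
    (forall c', consistent qs c c' -> forall i, ~ majority_ball c' i) \/
    (exists i, forall c', consistent qs c c' -> majority_ball c' i).

Definition N_CM_le (k n m : nat) : Prop :=
  exists qs : seq {set 'I_n}, cm_successful k qs /\ size qs <= m.

Definition uniform n k (H : {set {set 'I_n}}) : Prop :=
  forall e, e \in H -> #|e| = k.

Definition balanced n (c : coloring n) (e : {set 'I_n}) : Prop :=
  ncol c true e <= (ncol c false e).+1 /\ ncol c false e <= (ncol c true e).+1.

Definition property_C n (H : {set {set 'I_n}}) : Prop :=
  exists c : coloring n, forall e, e \in H -> balanced c e.

From mathcomp Require Import all_boot.
From mathcomp Require Import zify.
From Stdlib Require Import Classical.
Set Implicit Arguments. Unset Strict Implicit. Unset Printing Implicit Defensive.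

(* Fix a family [L] of [(k-1)]-sets (bases) and ask every query [j |: B] with
   [B \in L] and [j \notin B]: [size L * (n - k + 1)] queries.  If two answers
   for the same base differ, then [B] is unbalanced, the answers tell which
   balls outside [B] share a colour and how many balls of each colour [B]
   holds, so the sizes of both colour classes are determined and so is the
   outcome.  If all answers are constant, every unbalanced base has a
   monochromatic complement, which is a majority since [2 (k - 1) < n]; it
   remains to choose [L] so that a fixed ball lies in that majority.  For [k]
   even a single base works, as it has odd size.  For [k] odd take the edges of
   a hypergraph without Property C, one of which must be unbalanced, together
   with a base disjoint from one of its edges. *)

Lemma exists_subset_card (T : finType) (S : {set T}) m :
  m <= #|S| -> exists2 A : {set T}, A \subset S & #|A| = m.
Proof.
rewrite -bin_gt0 -cards_draws => /card_gt0P [A].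
by rewrite inE => /andP [sAS /eqP cardA]; exists A.
Qed.

Lemma exists_notin (T : finType) (A : {set T}) : #|A| < #|T| -> exists x, x \notin A.
Proof.
move=> small; have /card_gt0P [x] : 0 < #|~: A| by have := cardsC A; lia.
by rewrite inE; exists x.
Qed.

Lemma exists_notin2 (T : finType) (A B : {set T}) :
  #|A| + #|B| < #|T| -> exists2 x, x \notin A & x \notin B.
Proof.
move=> small; have [|x] := @exists_notin _ (A :|: B).
  by have := (leq_card_setU A B).1; lia.
by rewrite inE negb_or => /andP [xA xB]; exists x.
Qed.

Definition ext_answer n (c : coloring n) (B : {set 'I_n}) (j : 'I_n) :=
  cm_answer c (j |: B).

Section Colorings.

Variables (n : nat) (c : coloring n).
Implicit Types (A B : {set 'I_n}) (i j l : 'I_n).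

Lemma ncol_setU1 b B j : j \notin B -> ncol c b (j |: B) = ncol c b B + (c j == b).
Proof.
move=> jB; rewrite /ncol.
have -> : [set x in j |: B | c x == b] =
    if c j == b then j |: [set x in B | c x == b] else [set x in B | c x == b].
  apply/setP => x; case: (eqVneq x j) => [->|xj]; case: ifP => cjb;
    by rewrite !inE ?eqxx ?cjb ?(negbTE jB) ?(negbTE xj).
by case: ifP => _; rewrite ?addn0 // cardsU1 inE (negbTE jB) addnC.
Qed.

Lemma ncol_sum B : ncol c true B + ncol c false B = #|B|.
Proof.
rewrite /ncol -(cardsID [set x | c x] B).
by congr (_ + _); apply: eq_card => x; rewrite !inE; case: (c x); rewrite ?andbT ?andbF.
Qed.

Lemma ncol_neq_of_odd B : odd #|B| -> ncol c true B != ncol c false B.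
Proof. by rewrite -ncol_sum; apply: contraL => /eqP ->; rewrite addnn odd_double. Qed.

Lemma ext_answerE B j : j \notin B ->
  ext_answer c B j = minn (ncol c true B + c j) (ncol c false B + ~~ c j).
Proof. by move=> jB; rewrite /ext_answer /cm_answer !ncol_setU1 //; case: (c j). Qed.

Lemma ext_answer_eq_color B j j' : j \notin B -> j' \notin B ->
  c j = c j' -> ext_answer c B j = ext_answer c B j'.
Proof. by move=> jB j'B e; rewrite !ext_answerE // e. Qed.

Lemma ext_answer_inj B j j' : j \notin B -> j' \notin B ->
  ncol c true B != ncol c false B ->
  ext_answer c B j = ext_answer c B j' -> c j = c j'.
Proof.
move=> jB j'B; rewrite !ext_answerE //.
by case: (c j); case: (c j') => //= ? ?; lia.
Qed.

Lemma ext_answer_const_of_ncol_eq B j j' : j \notin B -> j' \notin B ->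
  ncol c true B = ncol c false B -> ext_answer c B j = ext_answer c B j'.
Proof. by move=> jB j'B e; rewrite !ext_answerE // e; case: (c j); case: (c j') => /=; lia. Qed.

Section Separated.

Variables (B : {set 'I_n}) (j j' : 'I_n).
Hypotheses (jB : j \notin B) (j'B : j' \notin B).
Hypothesis sep : ext_answer c B j != ext_answer c B j'.

Lemma ncol_neq_of_separated : ncol c true B != ncol c false B.
Proof. by apply: contra sep => /eqP e; apply/eqP/ext_answer_const_of_ncol_eq. Qed.

Lemma colorN_of_separated : c j' = ~~ c j.
Proof.
by move: sep; rewrite !ext_answerE //; case: (c j); case: (c j'); rewrite //= eqxx.
Qed.

(* If [j] makes the smaller answer, its colour is the majority of [j |: B] and
   that answer counts the other colour; otherwise the colour of [j] is the
   minority of [j' |: B]. *)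
Lemma ncol_color_separated :
  ncol c (c j) B =
  if ext_answer c B j < ext_answer c B j' then #|B| - ext_answer c B j
  else ext_answer c B j'.
Proof.
move: sep; rewrite !ext_answerE // -ncol_sum.
by case: (c j); case: (c j') => /= ?; case: ifP => ?; lia.
Qed.

Lemma card_color_class_separated :
  #|[set x | c x == c j]| =
  (if ext_answer c B j < ext_answer c B j' then #|B| - ext_answer c B j
   else ext_answer c B j')
  + #|[set l in ~: B | ext_answer c B l == ext_answer c B j]|.
Proof.
rewrite -ncol_color_separated -(cardsID B [set x | c x == c j]).
congr (_ + _); apply: eq_card => x; rewrite !inE; first by rewrite andbC.
case: (boolP (x \in B)) => //= xB; apply/eqP/eqP; first exact: ext_answer_eq_color.
exact: ext_answer_inj ncol_neq_of_separated.
Qed.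

End Separated.

Lemma majority_ball_eq_color i i' : c i = c i' -> majority_ball c i = majority_ball c i'.
Proof. by rewrite /majority_ball => ->. Qed.

Lemma majority_ball_outside B i :
  2 * #|B| < n -> (forall l, l \notin B -> c l = c i) -> majority_ball c i.
Proof.
move=> Bn mono; rewrite /majority_ball.
have sub : ~: B \subset [set x | c x == c i].
  by apply/subsetP => l; rewrite !inE => /mono ->.
apply: (@leq_trans (2 * #|~: B|)); last by rewrite leq_mul2l subset_leq_card ?orbT.
have := cardsC B; rewrite card_ord; lia.
Qed.

Lemma color_outside_of_const B j :
  ncol c true B != ncol c false B -> j \notin B ->
  (forall l, l \notin B -> ext_answer c B l = ext_answer c B j) ->
  forall l, l \notin B -> c l = c j.
Proof. by move=> ub jB const l lB; apply: ext_answer_inj ub (const l lB). Qed.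

Lemma card_color_class_disjoint A B i :
  [disjoint A & B] -> i \notin A -> i \notin B ->
  ncol c (c i) A + ncol c (c i) B < #|[set x | c x == c i]|.
Proof.
move=> dAB iA iB; rewrite /ncol.
have sub : i |: ([set x in A | c x == c i] :|: [set x in B | c x == c i])
    \subset [set x | c x == c i].
  by apply/subsetP => x; rewrite !inE => /or3P [/eqP ->| /andP [] | /andP []].
apply: leq_trans (subset_leq_card sub); rewrite cardsU1 !inE (negbTE iA) (negbTE iB).
rewrite cardsU; suff -> : [set x in A | c x == c i] :&: [set x in B | c x == c i] = set0.
  by rewrite cards0 subn0.
apply/setP => x; rewrite !inE; case xA: (x \in A) => //=.
by rewrite (disjointFr dAB xA) andbF.
Qed.

End Colorings.

Lemma majority_ball_consistent n (c c' : coloring n) (B : {set 'I_n}) j j' :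
  j \notin B -> j' \notin B -> ext_answer c B j != ext_answer c B j' ->
  (forall l, l \notin B -> ext_answer c' B l = ext_answer c B l) ->
  majority_ball c' j = majority_ball c j.
Proof.
move=> jB j'B sep agree.
have sep' : ext_answer c' B j != ext_answer c' B j' by rewrite !agree.
rewrite /majority_ball (card_color_class_separated jB j'B sep).
rewrite (card_color_class_separated jB j'B sep') !agree //.
suff -> : [set l in ~: B | ext_answer c' B l == ext_answer c B j] =
          [set l in ~: B | ext_answer c B l == ext_answer c B j] by [].
apply/setP => x; rewrite !inE.
by case: (boolP (x \in B)) => //= xB; rewrite agree.
Qed.

Definition ext_queries n (L : seq {set 'I_n}) : seq {set 'I_n} :=
  flatten [seq [seq j |: B | j <- enum (~: B)] | B <- L].

Definition const_answers n (L : seq {set 'I_n}) (c : coloring n) : Prop :=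
  forall B j j', B \in L -> j \notin B -> j' \notin B ->
  ext_answer c B j = ext_answer c B j'.

Section ExtensionQueries.

Variables (n : nat) (L : seq {set 'I_n}).

Lemma mem_ext_queries B j : B \in L -> j \notin B -> j |: B \in ext_queries L.
Proof.
move=> BL jB; apply/flatten_mapP; exists B => //.
by apply/mapP; exists j; rewrite ?mem_enum ?inE.
Qed.

Lemma consistent_ext_answer (c c' : coloring n) B l :
  consistent (ext_queries L) c c' -> B \in L -> l \notin B ->
  ext_answer c' B l = ext_answer c B l.
Proof. by move=> cons BL lB; apply/cons/mem_ext_queries. Qed.

Lemma outcome_of_separated (c : coloring n) B j j' :
  B \in L -> j \notin B -> j' \notin B -> ext_answer c B j != ext_answer c B j' ->
  (forall c', consistent (ext_queries L) c c' -> forall i, ~ majority_ball c' i) \/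
  (exists i, forall c', consistent (ext_queries L) c c' -> majority_ball c' i).
Proof.
move=> BL jB j'B sep.
have maj_cons c' x : consistent (ext_queries L) c c' -> x \in [:: j; j'] ->
    majority_ball c' x = majority_ball c x.
  move=> cons; have agree l : l \notin B -> ext_answer c' B l = ext_answer c B l.
    exact: consistent_ext_answer.
  rewrite !inE => /orP [] /eqP ->; first exact: majority_ball_consistent sep agree.
  by apply: majority_ball_consistent j'B jB _ agree; rewrite eq_sym.
have [[x xjj' majx] | nomaj] :=
  classic (exists2 x, x \in [:: j; j'] & majority_ball c x).
  by right; exists x => c' cons; rewrite (maj_cons c').
left => c' cons y.
have sep' : ext_answer c' B j != ext_answer c' B j'.
  by rewrite !(consistent_ext_answer cons BL).
have [x xjj' cyx] : exists2 x, x \in [:: j; j'] & c' y = c' x.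
  have cj' := colorN_of_separated jB j'B sep'.
  case: (eqVneq (c' y) (c' j)) => [cyj|/negbTE cyNj]; first by exists j; rewrite ?mem_head.
  by exists j'; rewrite ?inE ?eqxx ?orbT // cj'; move: cyNj; case: (c' y); case: (c' j).
by rewrite (majority_ball_eq_color cyx) (maj_cons c') // => majx; apply: nomaj; exists x.
Qed.

Lemma ext_queries_successful m i :
  (forall B, B \in L -> #|B| = m) ->
  (forall c, const_answers L c -> majority_ball c i) ->
  cm_successful m.+1 (ext_queries L).
Proof.
move=> cardL hw; split.
  move=> Q /flatten_mapP [B BL /mapP [j]]; rewrite mem_enum inE => jB ->.
  by rewrite cardsU1 jB cardL.
move=> c; have [[B [j [j' [BL jB j'B sep]]]] | nosep] := classic
  (exists B j j', [/\ B \in L, j \notin B, j' \notin B & ext_answer c B j != ext_answer c B j']).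
  exact: outcome_of_separated BL jB j'B sep.
right; exists i => c' cons; apply: hw => B j j' BL jB j'B.
rewrite !(consistent_ext_answer cons BL) //; apply/eqP/negPn/negP => sep.
by apply: nosep; exists B, j, j'.
Qed.

Lemma size_ext_queries m :
  (forall B, B \in L -> #|B| = m) -> size (ext_queries L) = size L * (n - m).
Proof.
elim: L => [|B L' IH] cardL //=.
rewrite size_cat size_map -cardE IH => [|B' B'L']; last by rewrite cardL // inE B'L' orbT.
by have := cardsC B; rewrite card_ord cardL ?mem_head; lia.
Qed.

End ExtensionQueries.

Lemma const_answers_odd_base n (A : {set 'I_n}) i (c : coloring n) :
  odd #|A| -> 2 * #|A| < n -> i \notin A -> const_answers [:: A] c -> majority_ball c i.
Proof.
move=> oddA An iA const; apply: (majority_ball_outside An).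
apply: (color_outside_of_const (ncol_neq_of_odd c oddA) iA) => l lA.
exact: const (mem_head _ _) lA iA.
Qed.

Lemma not_property_C_unbalanced n (H : {set {set 'I_n}}) (c : coloring n) :
  ~ property_C H -> exists2 e, e \in H & ncol c true e != ncol c false e.
Proof.
move=> npc; apply: NNPP => allbal; apply: npc; exists c => e eH.
have /negPn/eqP eqe : ~~ (ncol c true e != ncol c false e).
  by apply/negP => ub; apply: allbal; exists e.
by rewrite /balanced eqe; split.
Qed.

(* Some edge [e'] of [H] is unbalanced, so the balls outside [e'], a majority,
   share one colour.  If [i] had the other colour, the constant answers would
   force [A] and [e] to be balanced, so [e'] would contain [i] together with
   half of [A] and half of the disjoint [e]: more than [m] balls. *)
Lemma const_answers_no_property_C n m (L : seq {set 'I_n}) (H : {set {set 'I_n}})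
    A e i (c : coloring n) :
  uniform m H -> ~ property_C H -> {subset H <= L} -> A \in L -> e \in H ->
  #|A| = m -> [disjoint A & e] -> i \notin A -> i \notin e -> 2 * m < n ->
  const_answers L c -> majority_ball c i.
Proof.
move=> uH npc HL AL eH cardA dAe iA ie mn const.
have [e' e'H ub'] := not_property_C_unbalanced c npc.
have [l0 l0e'] : exists l0, l0 \notin e' by apply: exists_notin; rewrite card_ord uH //; lia.
have mono := color_outside_of_const ub' l0e' (fun l le' => const _ _ _ (HL _ e'H) le' l0e').
suff ci : c i = c l0.
  by rewrite (majority_ball_eq_color ci); apply: majority_ball_outside mono; rewrite uH.
case: (eqVneq (c i) (c l0)) => // ne; exfalso.
have half B : B \in L -> #|B| = m -> i \notin B -> 2 * ncol c (c i) B = m.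
  move=> BL cardB iB; have [eqB|ub] := eqVneq (ncol c true B) (ncol c false B).
    by have := ncol_sum c B; rewrite cardB; case: (c i); lia.
  have [x xB xe'] : exists2 x, x \notin B & x \notin e'.
    by apply: exists_notin2; rewrite card_ord cardB uH //; lia.
  have := color_outside_of_const ub iB (fun l lB => const _ _ _ BL lB iB) xB.
  by rewrite (mono x xe') => /esym; move/eqP: ne.
have sub : [set x | c x == c i] \subset e'.
  apply/subsetP => x; rewrite inE => /eqP cxi; apply: contraT => xe'.
  by move/eqP: ne; rewrite -cxi mono.
have := card_color_class_disjoint c dAe iA ie.
have := subset_leq_card sub; rewrite (uH e' e'H).
have := half A AL cardA iA; have := half e (HL e eH) (uH e eH) ie; lia.
Qed.

Lemma N_CM_le_ext_queries n m (L : seq {set 'I_n}) i :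
  (forall B, B \in L -> #|B| = m) ->
  (forall c, const_answers L c -> majority_ball c i) ->
  N_CM_le m.+1 n (size L * (n - m)).
Proof.
move=> cardL hw; exists (ext_queries L).
by rewrite (size_ext_queries cardL); split=> //; apply: ext_queries_successful hw.
Qed.

Lemma N_CM_le_odd_base n m : odd m -> 2 * m < n -> N_CM_le m.+1 n (n - m).
Proof.
move=> odd_m mn.
have [A _ cardA] : exists2 A : {set 'I_n}, A \subset setT & #|A| = m.
  by apply: exists_subset_card; rewrite cardsT card_ord; lia.
have [i iA] : exists i, i \notin A by apply: exists_notin; rewrite card_ord cardA; lia.
rewrite -[n - m]mul1n; apply: (@N_CM_le_ext_queries _ _ [:: A] i) => [B|c].
  by rewrite inE => /eqP ->.
by apply: const_answers_odd_base; rewrite ?cardA.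
Qed.

Lemma N_CM_le_no_property_C n m (H : {set {set 'I_n}}) :
  uniform m H -> ~ property_C H -> 2 * m < n ->
  N_CM_le m.+1 n ((n - m) * (1 + #|H|)).
Proof.
move=> uH npc mn.
have [e eH] : exists e, e \in H.
  case: (set_0Vmem H) => [H0|[e eH]]; last by exists e.
  by case: npc; exists [ffun=> true] => e; rewrite H0 inE.
have [A sAe cardA] : exists2 A : {set 'I_n}, A \subset ~: e & #|A| = m.
  by apply: exists_subset_card; have := cardsC e; rewrite card_ord uH //; lia.
have [i iA ie] : exists2 i, i \notin A & i \notin e.
  by apply: exists_notin2; rewrite card_ord cardA uH //; lia.
rewrite add1n mulnC cardE -[(size _).+1]/(size (A :: enum H)).
apply: (N_CM_le_ext_queries (i := i)) => [B|c].
  by rewrite inE mem_enum => /predU1P [->|/uH].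
apply: const_answers_no_property_C uH npc _ _ eH cardA _ iA ie mn => //.
- by move=> B BH; rewrite inE mem_enum BH orbT.
- by rewrite mem_head.
- by rewrite -[e]setCK -subsets_disjoint.
Qed.

Theorem theorem6 (k n : nat) :
  2 <= k -> 2 * k - 1 <= n ->
  (~~ odd k -> N_CM_le k n (n - k + 1)) /\
  (odd k -> forall H : {set {set 'I_n}},
      uniform (k - 1) H -> ~ property_C H ->
      N_CM_le k n ((n - k + 1) * (1 + #|H|))).
Proof.
case: k => [|m] // m1 mn; rewrite subn1 /=.
have mn' : 2 * m < n by lia.
have -> : n - m.+1 + 1 = n - m by lia.
split=> [/negPn odd_m | _ H uH npc]; first exact: N_CM_le_odd_base.
exact: N_CM_le_no_property_C.
Qed.
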